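(* Let $\mathbb{K}$ be a field and $\mathcal{S}$ a linear subspace of $\mathrm{M}_{n,p}(\mathbb{K})$ with $\operatorname{codim}\mathcal{S}\leq 2n-3$, such that every $M\in\mathcal{S}$ has the form $M=\begin{bmatrix}m_{1,1}&L(M)\\ 0_{(n-1)\times 1}&K(M)\end{bmatrix}$ (with $L(M)\in\mathrm{M}_{1,p-1}(\mathbb{K})$, $K(M)\in\mathrm{M}_{n-1,p-1}(\mathbb{K})$) and some $M\in\mathcal{S}$ has a nonzero first column. Let $q\geq 1$. Then the range-preserving group homomorphisms $F:\mathcal{S}\to\mathrm{M}_{n,q}(\mathbb{K})$ are exactly the maps $$M\longmapsto\begin{bmatrix}R(m_{1,1}) & L(M)+R'(m_{1,1})\\ 0_{(n-1)\times(q-p+1)} & K(M)\end{bmatrix}Q,$$ where $Q\in\mathrm{GL}_q(\mathbb{K})$ and $R:\mathbb{K}\to\mathrm{M}_{1,q-p+1}(\mathbb{K})$, $R':\mathbb{K}\to\mathrm{M}_{1,p-1}(\mathbb{K})$ are group homomorphisms with $R$ injective. Such homomorphisms exist if and only if $q\geq p$.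
   Context: A map $F:\mathcal{S}\to\mathrm{M}_{n,q}(\mathbb{K})$ is range-preserving when the column space of $F(M)$ equals that of $M$ for all $M\in\mathcal{S}$. *)

From HB Require Import structures.
From mathcomp Require Import all_boot all_order all_algebra.
Set Implicit Arguments. Unset Strict Implicit. Unset Printing Implicit Defensive.
Import GRing.Theory.
Local Open Scope ring_scope.

Definition codim (K : fieldType) (vT : vectType K) (S : {vspace vT}) : nat :=
  (\dim (fullv : {vspace vT}) - \dim S)%N.

Definition same_colspace (K : fieldType) (m n1 n2 : nat)
  (A : 'M[K]_(m, n1)) (B : 'M[K]_(m, n2)) : bool := (A^T == B^T)%MS.

(* F : S -> M_{m,q}(K) is a range-preserving group homomorphism
   (F is given as a total function; only its values on S matter). *)
Definition range_preserving_hom (K : fieldType) (m p q : nat)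
  (S : {vspace 'M[K]_(m, p)}) (F : 'M[K]_(m, p) -> 'M[K]_(m, q)) : Prop :=
  {in S &, forall A B, F (A + B) = F A + F B} /\
  {in S, forall M, same_colspace (F M) M}.

From HB Require Import structures.
From mathcomp Require Import all_boot all_order all_algebra.
From mathcomp Require Import zify.
From Stdlib Require Import Classical_Prop Lia.
Import GRing.Theory.
Local Open Scope ring_scope.
Set Implicit Arguments. Unset Strict Implicit. Unset Printing Implicit Defensive.

(* 1. Avoidance ([avoid_span_cols]): an affine space of matrices of small
      codimension contains a matrix whose column space, added to a subspace
      [U], still misses a vector [x] outside [U].  Induction on the number of
      columns, splitting off the first column ([firstcols], [tailspace]).
   2. Additive range-compatible maps into column vectors on a space of
      codimension at most [n - 2] are local ([range_compatible_local]):
      after subtracting the local part on the tail space, the map sends each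
      matrix to a multiple of its first column, hence is a fixed multiple of
      it ([colinear_is_scalar]).
   3. On the shaped space [S] the same correction gives, column by column,
      [F M = e1 *m rv m11 + rsubmx M *m Y] with [rv] additive
      ([shaped_decomposition]).
   4. Range preservation makes the rows of [Y], together with [rv a] for
      [a != 0], linearly independent ([tail_row_free], [corner_row_free]),
      again through the avoidance lemma.
   5. Completing [Y] to an invertible [Q] yields the block form; conversely
      every block form is range preserving; the rank bound and an explicit
      example give the criterion [q >= p]. *)

Definition additive_on (K : fieldType) (vT : vectType K) (V : zmodType)
  (S : {vspace vT}) (G : vT -> V) : Prop :=
  {in S &, forall A B, G (A + B) = G A + G B}.

Definition in_span_cols (K : fieldType) (n p : nat) (U : {vspace 'cV[K]_n})
  (x : 'cV[K]_n) (N : 'M[K]_(n, p)) : Prop :=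
  exists2 u, u \in U & exists z : 'cV[K]_p, x = u + N *m z.

Lemma exists_direction_avoiding (K : fieldType) (vT : vectType K)
    (U V : {vspace vT}) (a x : vT) :
  x \notin U -> (\dim U < \dim V)%N -> a \notin V ->
  exists2 v, v \in V & x \notin (U + <[a + v]>)%VS.
Proof.
move=> xU ltUV aV; apply: NNPP => hn.
have line_hit v : v \in V -> a + v \in (U + <[x]>)%VS.
  move=> vV; have : x \in (U + <[a + v]>)%VS.
    by apply: contraT => hx; case: hn; exists v.
  case/memv_addP=> u uU [_ /vlineP[t ->] ex].
  have t0 : t != 0 by apply: contraNneq xU => t0; rewrite ex t0 scale0r addr0.
  have -> : a + v = t^-1 *: (x - u).
    by rewrite ex (addrC u) addrK scalerA mulVf // scale1r.
  rewrite memvZ // memvB //; last exact: (subvP (addvSl U _)).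
  exact: (subvP (addvSr U _)) _ (memv_line x).
have sVUx : (V <= U + <[x]>)%VS.
  apply/subvP=> v vV; rewrite -[v](addKr a) memvD ?memvN ?line_hit //.
  by rewrite -[a]addr0 line_hit ?mem0v.
have eqV : V = (U + <[x]>)%VS.
  apply/eqP; rewrite eqEdim sVUx /=.
  apply: leq_trans (dimv_add_leqif U <[x]>).1 _.
  by rewrite dim_vline; case: (x != 0) => /=; lia.
by move: aV; rewrite eqV -[a]addr0 line_hit ?mem0v.
Qed.

Lemma dimv_add_line (K : fieldType) (vT : vectType K) (U : {vspace vT}) (c : vT) :
  (\dim (U + <[c]>) <= \dim U + (c != 0%R))%N.
Proof. by rewrite -dim_vline; exact: (dimv_add_leqif U <[c]>).1. Qed.

Section FirstColumn.

Variables (K : fieldType) (n p : nat).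
Implicit Types (S : {vspace 'M[K]_(n, 1 + p)}) (M : 'M[K]_(n, 1 + p)).

Definition firstcols S : {vspace 'cV[K]_n} := (linfun (@lsubmx K n 1 p) @: S)%VS.

Definition tailspace S : {vspace 'M[K]_(n, p)} :=
  (linfun (@rsubmx K n 1 p) @: (S :&: lker (linfun (@lsubmx K n 1 p))))%VS.

Lemma firstcolsP S c : reflect (exists2 M, M \in S & lsubmx M = c) (c \in firstcols S).
Proof.
apply: (iffP memv_imgP) => [[M MS ->]|[M MS <-]]; exists M => //; by rewrite lfunE.
Qed.

Lemma tailspaceE S w : (w \in tailspace S) = (row_mx 0 w \in S).
Proof.
apply/memv_imgP/idP => [[M /memv_capP[MS]]|wS].
  by rewrite memv_ker !lfunE /= => /eqP M0 ->; rewrite -M0 hsubmxK.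
exists (row_mx 0 w); last by rewrite lfunE /= row_mxKr.
by rewrite memv_cap wS memv_ker lfunE /= row_mxKl.
Qed.

Lemma dim_firstcols S : (\dim (firstcols S) <= n)%N.
Proof. by have := dimvS (subvf (firstcols S)); rewrite dimvf /= dim_matrix natrME muln1. Qed.

(* Rank–nullity for the first-column projection restricted to [S]. *)
Lemma codim_tailspace S : (codim (tailspace S) + n = codim S + \dim (firstcols S))%N.
Proof.
rewrite /codim !dimvf /= !dim_matrix !natrME.
set f := linfun (@lsubmx K n 1 p); set g := linfun (@rsubmx K n 1 p).
have dimS := limg_ker_dim f S.
have dimT := limg_ker_dim g (S :&: lker f).
have cap0 : (S :&: lker f :&: lker g = 0)%VS.
  apply/eqP; rewrite -subv0; apply/subvP=> M /memv_capP[/memv_capP[_]].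
  rewrite !memv_ker !lfunE /= => /eqP l0 /eqP r0.
  by rewrite memv0 -[M]hsubmxK l0 r0 row_mx0.
have leS : (\dim S <= n * (1 + p))%N.
  by have := dimvS (subvf S); rewrite dimvf /= dim_matrix natrME.
have leT : (\dim (tailspace S) <= n * p)%N.
  by have := dimvS (subvf (tailspace S)); rewrite dimvf /= dim_matrix natrME.
rewrite cap0 dimv0 add0n in dimT.
rewrite /tailspace /firstcols -/f -/g dimT mulnDr muln1 in leS leT *.
(* Name the dimensions so that [lia] treats them as atoms. *)
set d := \dim (S :&: lker f) in dimS leT *; set s := \dim S in dimS leS *.
by move: d s (\dim _) (n * p)%N dimS leS leT => d s e np; lia.
Qed.

Lemma in_span_cols_row_mx (U : {vspace 'cV[K]_n}) x (c : 'cV[K]_n) (N : 'M[K]_(n, p)) :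
  in_span_cols U x (row_mx c N) -> in_span_cols (U + <[c]>) x N.
Proof.
case=> u uU [z ->]; exists (u + c *m usubmx z); last first.
  by exists (dsubmx z); rewrite -{1}[z]vsubmxK mul_row_col addrA.
by rewrite memv_add // [usubmx z]mx11_scalar mul_mx_scalar memvZ ?memv_line.
Qed.

End FirstColumn.

Lemma exists_img_notin (K : fieldType) (vT wT : vectType K) (f : 'Hom(vT, wT))
    (S : {vspace vT}) (V : {vspace wT}) :
  (\dim V < \dim (f @: S))%N -> exists2 v, v \in S & f v \notin V.
Proof.
move=> ltVS; have : ~~ (f @: S <= V)%VS.
  by apply: contraTN ltVS => /dimvS; rewrite leqNgt.
by case/subvPn=> _ /memv_imgP[v vS ->] fv; exists v.
Qed.

Section Avoidance.

Variables (K : fieldType) (n : nat).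

(* Induction on [p]: first fix a good first column, then recurse
   on the remaining columns inside the tail space. *)
Lemma avoid_span_cols p (W : {vspace 'M[K]_(n, p)}) (N0 : 'M[K]_(n, p))
    (U : {vspace 'cV[K]_n}) (x : 'cV[K]_n) :
  (codim W + \dim U + 1 <= n)%N -> x \notin U ->
  exists2 w, w \in W & ~ in_span_cols U x (N0 + w).
Proof.
elim: p W N0 U => [W N0 U hc xU|p IH].
  exists 0; rewrite ?mem0v // => -[u uU [z]].
  by rewrite (thinmx0 (N0 + 0)) mul0mx addr0 => ex; rewrite ex uU in xU.
change p.+1 with (1 + p)%N; move=> W N0 U hc xU.
have dimW := codim_tailspace W; have leF := dim_firstcols W.
have fix_first w0 : w0 \in W -> x \notin (U + <[lsubmx (N0 + w0)]>)%VS ->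
    (codim (tailspace W) + \dim U + (lsubmx (N0 + w0) != 0%R) + 1 <= n)%N ->
    exists2 w, w \in W & ~ in_span_cols U x (N0 + w).
  move=> w0W xU' hc'.
  have [|w' w'T hw'] := IH (tailspace W) (rsubmx (N0 + w0)) _ _ xU'.
    apply: leq_trans hc'; rewrite leq_add2r -addnA leq_add2l.
    exact: dimv_add_line.
  exists (w0 + row_mx 0 w'); first by rewrite memvD // -tailspaceE.
  rewrite addrA -{1}[N0 + w0]hsubmxK add_row_mx addr0.
  by move/in_span_cols_row_mx.
case: (boolP (- lsubmx N0 \in firstcols W)) => [/firstcolsP[w0 w0W e0] | nN0].
  have c0 : lsubmx (N0 + w0) = 0 by rewrite linearD /= e0 addrN.
  apply: (fix_first w0) => //; rewrite c0; last by rewrite eqxx; lia.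
  suff -> : <[0 : 'cV[K]_n]>%VS = 0%VS by rewrite addv0.
  by apply/eqP; rewrite -dimv_eq0 dim_vline eqxx.
have ltF : (\dim (firstcols W) < n)%N.
  rewrite ltn_neqAle leF andbT; apply: contraNneq nN0 => eqF.
  suff -> : firstcols W = fullv by rewrite memvf.
  by apply/eqP; rewrite eqEdim subvf dimvf /= dim_matrix natrME muln1 eqF.
have ltUF : (\dim U < \dim (firstcols W))%N by lia.
have aF : lsubmx N0 \notin firstcols W by rewrite -memvN.
have [v /firstcolsP[w0 w0W <-] xU'] := exists_direction_avoiding xU ltUF aF.
apply: (fix_first w0); rewrite ?linearD //; have := leq_b1 (lsubmx (N0 + w0) != 0); lia.
Qed.

Lemma exists_free_first_column p (W : {vspace 'M[K]_(n, 1 + p)}) :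
  (codim W + 2 <= n)%N -> exists2 N, N \in W & ~ in_span_cols 0 (lsubmx N) (rsubmx N).
Proof.
move=> hc; have dimW := codim_tailspace W.
have posF : (0 < \dim (firstcols W))%N by lia.
have [|N0 N0W nz0] := @exists_img_notin _ _ _ (linfun (@lsubmx K n 1 p)) W 0.
  by rewrite dimv0.
rewrite lfunE /= in nz0.
have hcT : (codim (tailspace W) + \dim (0%VS : {vspace 'cV[K]_n}) + 1 <= n)%N.
  by rewrite dimv0; have := dim_firstcols W; lia.
have [w wT hw] := avoid_span_cols (rsubmx N0) hcT nz0.
exists (N0 + row_mx 0 w); first by rewrite memvD // -tailspaceE.
by rewrite linearD /= row_mxKl addr0 linearD /= row_mxKr.
Qed.

End Avoidance.

Definition range_compatible (K : fieldType) (n p : nat) (S : {vspace 'M[K]_(n, p)})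
  (G : 'M[K]_(n, p) -> 'cV[K]_n) : Prop :=
  {in S, forall M, exists z : 'cV[K]_p, G M = M *m z}.

Definition local_on (K : fieldType) (n p : nat) (S : {vspace 'M[K]_(n, p)})
  (G : 'M[K]_(n, p) -> 'cV[K]_n) : Prop :=
  exists y : 'cV[K]_p, {in S, forall M, G M = M *m y}.

Lemma scale_exchange (K : fieldType) (V : lmodType K) (a b : V) (la lb mu : K) :
  la *: a + lb *: b = mu *: a + mu *: b -> (lb - mu) *: b = (mu - la) *: a.
Proof.
move=> e; rewrite !scalerBl.
have -> : lb *: b = mu *: a + mu *: b - la *: a by rewrite -e (addrC (la *: a)) addrK.
by rewrite (addrAC (mu *: a)) addrK.
Qed.

Section ColinearMaps.

Variables (K : fieldType) (vT wT : vectType K) (S : {vspace vT}).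
Variables (f : 'Hom(vT, wT)) (h : vT -> wT).
Hypotheses (h_add : additive_on S h) (h_line : {in S, forall v, h v \in <[f v]>%VS}).

(* On two vectors with independent images, the proportionality factors
   between [h] and [f] agree (compare with the factor of their sum). *)
Lemma colinear_same_factor A B la lb : A \in S -> B \in S ->
  f A != 0 -> f B \notin <[f A]>%VS -> h A = la *: f A -> h B = lb *: f B -> la = lb.
Proof.
move=> AS BS nzA nB hA hB.
have /vlineP[mu hmu] := h_line (memvD AS BS).
rewrite h_add // hA hB linearD /= scalerDr in hmu.
have e := scale_exchange hmu.
have lb_mu : lb = mu.
  apply/eqP; apply: contraNT nB; rewrite -subr_eq0 => ne.
  by rewrite -[f B](scalerK ne) e scalerA memvZ ?memv_line.
move: e; rewrite lb_mu subrr scale0r => /esym/eqP.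
by rewrite scaler_eq0 (negPf nzA) orbF subr_eq0 => /eqP.
Qed.

Lemma colinear_is_scalar :
  (2 <= \dim (f @: S))%N -> exists l, {in S, forall v, h v = l *: f v}.
Proof.
move=> dimS.
have [|M0 M0S] := exists_img_notin (f := f) (S := S) (V := 0%VS).
  by rewrite dimv0 ltnW.
rewrite memv0 => nz0.
have [|M1 M1S n1] := exists_img_notin (V := <[f M0]>%VS) (S := S) (f := f).
  by rewrite dim_vline nz0.
have factor v : v \in S -> exists l, h v = l *: f v by move/h_line/vlineP.
have [l0 h0] := factor M0 M0S; exists l0 => M MS; have [l hl] := factor M MS.
case: (boolP (f M \in <[f M0]>%VS)) => [/vlineP[k fM]|nM]; last first.
  by rewrite hl (colinear_same_factor M0S MS nz0 nM h0 hl).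
have [l1 h1] := factor M1 M1S.
case: (eqVneq k 0) => [k0|nzk]; first by rewrite hl fM k0 !scale0r !scaler0.
have nzM : f M != 0 by rewrite fM scaler_eq0 negb_or nzk.
have n1' : f M1 \notin <[f M]>%VS.
  by apply: contra n1 => /vlineP[j ->]; rewrite fM scalerA memvZ ?memv_line.
rewrite hl (colinear_same_factor MS M1S nzM n1' hl h1).
by rewrite -(colinear_same_factor M0S M1S nz0 n1 h0 h1).
Qed.

End ColinearMaps.

Lemma factor_through_coord (K : fieldType) (vT : vectType K) (V : zmodType)
    (S : {vspace vT}) (phi : vT -> K) (h : vT -> V) :
  (forall t v, phi (t *: v) = t * phi v) -> additive_on S h ->
  {in S &, forall A B, phi A = phi B -> h A = h B} ->
  (exists2 v0, v0 \in S & phi v0 != 0) ->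
  exists rho : K -> V, {morph rho : a b / a + b} /\ {in S, forall v, h v = rho (phi v)}.
Proof.
move=> phiZ h_add h_fib [v0 v0S nz0].
exists (fun t => h ((t / phi v0) *: v0)); split.
  by move=> s t /=; rewrite mulrDl scalerDl h_add ?memvZ.
by move=> v vS; apply: h_fib; rewrite ?memvZ // phiZ mulfVK.
Qed.

Definition tail_corrected (K : fieldType) (n p : nat) (G : 'M[K]_(n, 1 + p) -> 'cV[K]_n)
  (y : 'cV[K]_p) (M : 'M[K]_(n, 1 + p)) : 'cV[K]_n := G M - rsubmx M *m y.

Section TailCorrection.

Variables (K : fieldType) (n p : nat) (S : {vspace 'M[K]_(n, 1 + p)}).
Variable G : 'M[K]_(n, 1 + p) -> 'cV[K]_n.
Hypotheses (G_add : additive_on S G) (G_comp : range_compatible S G).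

Lemma tail_restriction :
  additive_on (tailspace S) (fun N => G (row_mx 0 N)) /\
  range_compatible (tailspace S) (fun N => G (row_mx 0 N)).
Proof.
split=> [A B AT BT | N NT] /=.
  by rewrite -{1}[0 : 'cV_n]addr0 -add_row_mx G_add -?tailspaceE.
have NS : row_mx 0 N \in S by rewrite -tailspaceE.
have [z ->] := G_comp NS; exists (dsubmx z).
by rewrite -{1}[z]vsubmxK mul_row_col mul0mx add0r.
Qed.

Variable y : 'cV[K]_p.
Hypothesis G_tail : {in tailspace S, forall N, G (row_mx 0 N) = N *m y}.
Local Notation H := (tail_corrected G y).

Lemma tail_corrected_additive : additive_on S H.
Proof.
by move=> A B AS BS; rewrite /tail_corrected G_add // linearD mulmxDl opprD addrACA.
Qed.

Lemma tail_corrected_fiber : {in S &, forall M1 M2, lsubmx M1 = lsubmx M2 -> H M1 = H M2}.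
Proof.
move=> M1 M2 M1S M2S e.
have eD : M1 - M2 = row_mx 0 (rsubmx (M1 - M2)).
  by rewrite -{1}[M1 - M2]hsubmxK linearB /= e subrr.
have DT : rsubmx (M1 - M2) \in tailspace S by rewrite tailspaceE -eD memvB.
have -> : M1 = M2 + (M1 - M2) by rewrite addrC subrK.
rewrite tail_corrected_additive ?memvB // eD /tail_corrected G_tail //.
by rewrite row_mxKr subrr addr0.
Qed.

(* The corrected map sends each matrix to a multiple of its first column:
   otherwise the avoidance lemma would produce a matrix with the same first
   column whose column space misses the corrected value. *)
Lemma tail_corrected_in_line :
  (codim (tailspace S) + 2 <= n)%N -> {in S, forall M, H M \in <[lsubmx M]>%VS}.
Proof.
move=> hc M MS; case: (boolP (H M \in _)) => // notin; exfalso.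
have hcU : (codim (tailspace S) + \dim <[lsubmx M]> + 1 <= n)%N.
  by have := leq_b1 (lsubmx M != 0); rewrite -dim_vline; lia.
have [w wT hw] := avoid_span_cols (rsubmx M) hcU notin.
set M2 := M + row_mx 0 w.
have M2S : M2 \in S by rewrite memvD // -tailspaceE.
have [l2 r2] : lsubmx M2 = lsubmx M /\ rsubmx M2 = rsubmx M + w.
  by rewrite !linearD /= row_mxKl row_mxKr addr0.
have [z Gz] := G_comp M2S.
apply: hw; exists (lsubmx M *m usubmx z).
  by rewrite [usubmx z]mx11_scalar mul_mx_scalar memvZ ?memv_line.
exists (dsubmx z - y).
rewrite (tail_corrected_fiber MS M2S (esym l2)) /tail_corrected Gz.
by rewrite -{1}[M2]hsubmxK -{1}[z]vsubmxK mul_row_col l2 r2 mulmxBr addrA.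
Qed.

End TailCorrection.

(* Induction on the number of
   columns: the tail correction is, up to a scalar, the first column. *)
Theorem range_compatible_local (K : fieldType) (n p : nat) (S : {vspace 'M[K]_(n, p)})
    (G : 'M[K]_(n, p) -> 'cV[K]_n) :
  (codim S + 2 <= n)%N -> additive_on S G -> range_compatible S G -> local_on S G.
Proof.
elim: p S G => [S G _ _ G_comp|p IH].
  by exists 0 => M MS; have [z ->] := G_comp M MS; rewrite (thinmx0 M) !mul0mx.
change p.+1 with (1 + p)%N; move=> S G hc G_add G_comp.
have dimS := codim_tailspace S; have leF := dim_firstcols S.
have hcT : (codim (tailspace S) + 2 <= n)%N by lia.
have [T_add T_comp] := tail_restriction G_add G_comp.
have [y G_tail] := IH _ _ hcT T_add T_comp.
have [||l hl] := @colinear_is_scalar _ _ _ S (linfun (@lsubmx K n 1 p))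
    (tail_corrected G y) (tail_corrected_additive G_add y).
- by move=> M MS; rewrite lfunE; exact: (tail_corrected_in_line G_add G_comp G_tail hcT MS).
- by have : (1 < \dim (firstcols S))%N by lia.
exists (col_mx l%:M y) => M MS.
rewrite -[M in M *m _]hsubmxK mul_row_col mul_mx_scalar.
by have := hl M MS; rewrite lfunE /tail_corrected => <-; rewrite subrK.
Qed.

Lemma colspace_mul_sub (K : fieldType) (m n1 n2 : nat) (A : 'M[K]_(m, n1)) (B : 'M[K]_(m, n2)) :
  (A^T <= B^T)%MS -> forall v : 'cV[K]_n1, exists t : 'cV[K]_n2, A *m v = B *m t.
Proof.
case/submxP=> D AD v; exists (D^T *m v).
by rewrite -[A]trmxK AD trmx_mul trmxK mulmxA.
Qed.

Lemma additive_morph0 (U V : zmodType) (f : U -> V) : {morph f : a b / a + b} -> f 0 = 0.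
Proof. by move=> f_add; apply/eqP; rewrite -(subrr (f 0)) -{2}[0]addr0 f_add addrK. Qed.

Lemma ulsubmx00 (K : fieldType) (n' p' : nat) (M : 'M[K]_(1 + n', 1 + p')) :
  ulsubmx M ord0 ord0 = lsubmx M 0 0.
Proof. by rewrite !mxE; congr (M _ _); apply/val_inj. Qed.

Lemma lsubmx_mulmx (K : fieldType) (m p : nat) (A : 'M[K]_(m, 1 + p)) :
  A *m col_mx 1%:M 0 = lsubmx A.
Proof. by rewrite -{1}[A]hsubmxK mul_row_col mulmx1 mulmx0 addr0. Qed.

Lemma row_kernel_normal_form (K : fieldType) (p : nat) (z : 'rV[K]_(1 + p)) :
  z != 0 -> exists2 U : 'M[K]_(1 + p), U \in unitmx &
    forall q (Y : 'M[K]_(1 + p, q)), z *m Y = 0 -> usubmx (U *m Y) = 0.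
Proof.
move=> nz; exists (row_ebase z); first exact: row_ebase_unit.
have rz : \rank z = 1%N by apply/eqP; rewrite eqn_leq rank_leq_row lt0n mxrank_eq0.
have ez : z = col_ebase z *m pid_mx 1 *m row_ebase z by rewrite -{1}(mulmx_ebase z) rz.
move=> q Y zY; set V := row_ebase z *m Y.
have : col_ebase z *m (pid_mx 1 *m V) = 0 by rewrite /V !mulmxA -ez.
rewrite (@pid_mx_row _ p) -{1}[V]vsubmxK mul_row_col mul0mx addr0 mul1mx => h.
by rewrite -[usubmx V](mulKmx (col_ebase_unit z)) h mulmx0.
Qed.

Lemma codim_mulmxr (K : fieldType) (n p : nat) (W : {vspace 'M[K]_(n, p)}) (P : 'M[K]_p) :
  P \in unitmx -> codim (linfun (mulmxr P) @: W) = codim W.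
Proof.
move=> Pu; have Pfree : row_free P by rewrite row_free_unit.
rewrite /codim limg_dim_eq //.
apply/eqP; rewrite -subv0; apply/subvP => N /memv_capP[_].
by rewrite memv_ker lfunE memv0 /= mulmx_free_eq0.
Qed.

(* If every matrix [N] of a space of codimension at most [n - 2] has its
   column space inside that of [N *m Y], then [Y] has independent rows:
   a relation [z *m Y = 0] would, after a change of basis sending [z] to the
   first coordinate form, contradict [exists_free_first_column]. *)
Lemma row_free_of_colspace (K : fieldType) (n p q : nat) (W : {vspace 'M[K]_(n, p)})
    (Y : 'M[K]_(p, q)) :
  (codim W + 2 <= n)%N -> {in W, forall N, (N^T <= (N *m Y)^T)%MS} -> row_free Y.
Proof.
case: p W Y => [|p] W Y hc hcov; first by rewrite /row_free -leqn0 rank_leq_row.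
move: W Y hc hcov; change p.+1 with (1 + p)%N => W Y hc hcov.
apply: inj_row_free => z zY; apply/eqP; apply: contraT => nz.
have [U Uu hU] := row_kernel_normal_form nz; set V := U *m Y.
have [|_ /memv_imgP[N NW ->]] := exists_free_first_column
    (W := (linfun (mulmxr (invmx U)) @: W)%VS).
  by rewrite codim_mulmxr ?unitmx_inv.
rewrite lfunE /= => hfree; case: hfree; exists 0; rewrite ?mem0v //.
have NY : N *m Y = rsubmx (N *m invmx U) *m dsubmx V.
  have -> : N *m Y = N *m invmx U *m V by rewrite /V mulmxA mulmxKV.
  rewrite -[V in N *m invmx U *m V]vsubmxK (hU _ _ zY).
  by rewrite -{1}[N *m invmx U]hsubmxK mul_row_col mulmx0 add0r.
have [t ht] := colspace_mul_sub (hcov N NW) (invmx U *m col_mx 1%:M 0).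
by exists (dsubmx V *m t); rewrite add0r -lsubmx_mulmx -mulmxA ht NY mulmxA.
Qed.

Definition e1 (K : fieldType) (n' : nat) : 'cV[K]_(1 + n') := col_mx 1 0.

Lemma e1_00 (K : fieldType) (n' : nat) : e1 K n' 0 0 = 1.
Proof.
have -> : (0 : 'I_(1 + n')) = lshift n' 0 by apply/val_inj.
by rewrite col_mxEu mxE.
Qed.

Lemma lsub_shape (K : fieldType) (n' p' : nat) (M : 'M[K]_(1 + n', 1 + p')) :
  dlsubmx M = 0 -> lsubmx M = ulsubmx M ord0 ord0 *: e1 K n'.
Proof.
move=> dl0; rewrite -{1}[M]submxK block_mxEh row_mxKl dl0 /e1.
by rewrite scale_col_mx scaler0 scalemx1 -mx11_scalar.
Qed.

Section ShapedSpace.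

Variables (K : fieldType) (n' p' : nat) (S : {vspace 'M[K]_(1 + n', 1 + p')}).
Hypotheses (hcodim : (codim S + 3 <= 2 * (1 + n'))%N)
  (hshape : {in S, forall M, dlsubmx M = 0})
  (hcol : exists2 M, M \in S & lsubmx M != 0).

(* All first columns are multiples of [e1], so the tail space has
   codimension at most [n - 2]. *)
Lemma shaped_tail_codim : (codim (tailspace S) + 2 <= 1 + n')%N.
Proof.
have dimS := codim_tailspace S.
have : (firstcols S <= <[e1 K n']>)%VS.
  apply/subvP=> _ /firstcolsP[M MS <-].
  by rewrite (lsub_shape (hshape MS)) memvZ ?memv_line.
move/dimvS; rewrite dim_vline => leF; have := leq_b1 (e1 K n' != 0); lia.
Qed.

Lemma first_entry_nonzero : exists2 M, M \in S & ulsubmx M ord0 ord0 != 0.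
Proof.
case: hcol => M MS nzM; exists M => //.
by apply: contraNneq nzM; rewrite (lsub_shape (hshape MS)) => ->; rewrite scale0r.
Qed.

Lemma shaped_range_compatible (G : 'M[K]_(1 + n', 1 + p') -> 'cV[K]_(1 + n')) :
  additive_on S G -> range_compatible S G ->
  exists (y : 'cV[K]_p') (rho : K -> K), {morph rho : a b / a + b} /\
    {in S, forall M, G M = rho (ulsubmx M ord0 ord0) *: e1 K n' + rsubmx M *m y}.
Proof.
move=> G_add G_comp.
have [T_add T_comp] := tail_restriction G_add G_comp.
have [y G_tail] := range_compatible_local shaped_tail_codim T_add T_comp.
set H := tail_corrected G y.
have H_e1 M : M \in S -> H M = H M 0 0 *: e1 K n'.
  move=> MS; rewrite /H.
  have := tail_corrected_in_line G_add G_comp G_tail shaped_tail_codim MS.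
  rewrite (lsub_shape (hshape MS)) => /vlineP[k ->].
  by rewrite scalerA [(_ *: e1 K n') 0 0]mxE e1_00 mulr1.
have phiZ t (M : 'M[K]_(1 + n', 1 + p')) :
    ulsubmx (t *: M) ord0 ord0 = t * ulsubmx M ord0 ord0.
  by rewrite !mxE.
have h_add : additive_on S (fun M => H M 0 0).
  by move=> A B AS BS /=; rewrite /H (tail_corrected_additive G_add) // mxE.
have h_fib :
    {in S &, forall A B, ulsubmx A ord0 ord0 = ulsubmx B ord0 ord0 -> H A 0 0 = H B 0 0}.
  move=> A B AS BS e; rewrite /H (tail_corrected_fiber G_add G_tail AS BS) //.
  by rewrite (lsub_shape (hshape AS)) (lsub_shape (hshape BS)) e.
have [rho [rho_add hrho]] := factor_through_coord phiZ h_add h_fib first_entry_nonzero.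
exists y, rho; split=> // M MS.
by have /= <- := hrho M MS; rewrite -H_e1 // /H /tail_corrected subrK.
Qed.

Lemma shaped_decomposition q (F : 'M[K]_(1 + n', 1 + p') -> 'M[K]_(1 + n', q)) :
  range_preserving_hom S F ->
  exists (Y : 'M[K]_(p', q)) (rv : K -> 'rV[K]_q), {morph rv : a b / a + b} /\
    {in S, forall M, F M = e1 K n' *m rv (ulsubmx M ord0 ord0) + rsubmx M *m Y}.
Proof.
case=> F_add F_range.
have col_dec j : exists yr : 'cV[K]_p' * (K -> K), {morph yr.2 : a b / a + b} /\
    {in S, forall M, col j (F M) = yr.2 (ulsubmx M ord0 ord0) *: e1 K n' + rsubmx M *m yr.1}.
  have [||y [r [r_add hr]]] := @shaped_range_compatible (fun M => col j (F M)).
  - by move=> A B AS BS /=; rewrite F_add // linearD.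
  - move=> M MS /=; rewrite colE; apply: colspace_mul_sub.
    by case/andP: (F_range M MS).
  - by exists (y, r).
have [f hf] := fin_all_exists col_dec.
exists (\matrix_(i, j) (f j).1 i 0), (fun a => \row_j (f j).2 a); split.
  by move=> a b; apply/rowP => j; rewrite !mxE (hf j).1.
move=> M MS; apply/matrixP => i j.
have := congr1 (fun X : 'cV[K]_(1 + n') => X i 0) ((hf j).2 M MS).
rewrite !mxE big_ord1 !mxE => ->; rewrite mulrC; congr (_ + _).
by apply: eq_bigr => k _; rewrite !mxE.
Qed.

Variables (q : nat) (F : 'M[K]_(1 + n', 1 + p') -> 'M[K]_(1 + n', q)).
Variables (Y : 'M[K]_(p', q)) (rv : K -> 'rV[K]_q).
Hypotheses (F_rp : range_preserving_hom S F) (rv_add : {morph rv : a b / a + b})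
  (F_dec : {in S, forall M, F M = e1 K n' *m rv (ulsubmx M ord0 ord0) + rsubmx M *m Y}).

Lemma colspace_sub_image M : M \in S -> (M^T <= (F M)^T)%MS.
Proof. by case: F_rp => _ F_range MS; case/andP: (F_range M MS). Qed.

(* On matrices with zero first column, [F] is right multiplication by [Y],
   and range preservation forces [Y] to have independent rows. *)
Lemma tail_row_free : row_free Y.
Proof.
apply: (row_free_of_colspace shaped_tail_codim) => N NT.
have MS : row_mx 0 N \in S by rewrite -tailspaceE.
have FM : F (row_mx 0 N) = N *m Y.
  by rewrite F_dec // ulsubmx00 row_mxKl mxE (additive_morph0 rv_add) mulmx0 add0r row_mxKr.
rewrite -FM; apply: submx_trans _ (colspace_sub_image MS).
have eN : (row_mx 0 N : 'M[K]_(1 + n', 1 + p')) *m col_mx 0 1%:M = N.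
  by rewrite mul_row_col mulmx0 mulmx1 add0r.
by rewrite -{1}eN trmx_mul submxMl.
Qed.

Lemma corner_witness a (C : 'M[K]_(1 + n', p')) :
  exists2 M, M \in S & ulsubmx M ord0 ord0 = a /\ ~ in_span_cols 0 (e1 K n') (rsubmx M + C).
Proof.
have [M0 M0S nz0] := first_entry_nonzero.
set Ma := (a / ulsubmx M0 ord0 ord0) *: M0.
have hc : (codim (tailspace S) + \dim (0%VS : {vspace 'cV[K]_(1 + n')}) + 1 <= 1 + n')%N.
  by rewrite dimv0; have := shaped_tail_codim; lia.
have e1_0 : e1 K n' \notin 0%VS.
  rewrite memv0; apply/eqP => e; move: (e1_00 K n').
  by rewrite e mxE => /esym/eqP; rewrite oner_eq0.
have [D DT hD] := avoid_span_cols (rsubmx Ma + C) hc e1_0.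
exists (Ma + row_mx 0 D); first by rewrite memvD ?memvZ // -tailspaceE.
split; first by rewrite ulsubmx00 linearD /= row_mxKl addr0 linearZ /= mxE -(ulsubmx00 M0) mulfVK.
by rewrite linearD /= row_mxKr addrAC.
Qed.

(* The corner row [rv a] is independent from the rows of [Y] unless [a = 0]:
   a witness from [corner_witness] would otherwise have [e1] in its column
   space but not in that of its image. *)
Lemma corner_row_free a (z : 'rV[K]_p') : rv a + z *m Y = 0 -> a = 0.
Proof.
move=> h; apply/eqP; apply: contraT => nza; exfalso.
have [M MS [aM hM]] := corner_witness a (- (e1 K n' *m z)).
have rva : rv a = - (z *m Y) by apply/eqP; rewrite -addr_eq0 h.
have FM : F M = (rsubmx M - e1 K n' *m z) *m Y.
  by rewrite F_dec // aM rva mulmxN mulmxBl mulmxA addrC.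
have [t ht] := colspace_mul_sub (colspace_sub_image MS) (col_mx (a^-1)%:M 0).
have Me : M *m col_mx (a^-1)%:M 0 = e1 K n'.
  rewrite -[M in M *m _]hsubmxK mul_row_col mulmx0 addr0 (lsub_shape (hshape MS)) aM.
  by rewrite mul_mx_scalar scalerA mulVf // scale1r.
by case: hM; exists 0; rewrite ?mem0v //; exists (Y *m t); rewrite add0r -{1}Me ht FM mulmxA.
Qed.

Lemma corner_tail_row_free a : a != 0 -> row_free (col_mx (rv a) Y).
Proof.
move=> nza; apply: inj_row_free => w.
rewrite -[w]hsubmxK mul_row_col [lsubmx w]mx11_scalar mul_scalar_mx => hw.
have t0 : lsubmx w 0 0 = 0.
  apply: contraTeq nza => nzt; rewrite negbK; apply/eqP.
  apply: (@corner_row_free _ ((lsubmx w 0 0)^-1 *: rsubmx w)).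
  by rewrite -scalemxAl -[rv a](scalerK nzt) -scalerDr hw scaler0.
move: hw; rewrite t0 scale0r add0r => /eqP; rewrite mulmx_free_eq0 ?tail_row_free // => /eqP ->.
by rewrite -scalemx1 scale0r row_mx0.
Qed.

End ShapedSpace.

Lemma row_free_completion (K : fieldType) (r p : nat) (Y : 'M[K]_(p, r + p)) :
  row_free Y -> exists Z : 'M[K]_(r, r + p), col_mx Z Y \in unitmx.
Proof.
move=> Yfree; have rC : \rank (Y^C)%MS = r by rewrite mxrank_compl (eqP Yfree) addnK.
exists (castmx (rC, erefl) (row_base (Y^C)%MS)).
rewrite -row_full_unit /row_full -addsmxE.
have -> : (castmx (rC, erefl) (row_base (Y^C)%MS) + Y :=: Y^C + Y)%MS.
  by apply: adds_eqmx => //; exact: eqmx_trans (eqmx_cast _ _) (eq_row_base _).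
by rewrite addsmxC; exact: addsmx_compl_full.
Qed.

Lemma same_colspace_mulmx_unit (K : fieldType) (m n1 n2 : nat) (A : 'M[K]_(m, n1))
    (B : 'M[K]_(m, n2)) (Q : 'M[K]_n1) :
  Q \in unitmx -> same_colspace (A *m Q) B = same_colspace A B.
Proof.
move=> Qu; have QTfull : row_full Q^T by rewrite row_full_unit unitmx_tr.
by rewrite /same_colspace trmx_mul !(eqmxMfull _ QTfull).
Qed.

Lemma block_form_colspace (K : fieldType) (n' p' r : nat) (M : 'M[K]_(1 + n', 1 + p'))
    (Ra : 'rV[K]_r) (R'a : 'rV[K]_p') :
  dlsubmx M = 0 -> (Ra == 0) = (ulsubmx M ord0 ord0 == 0) ->
  (ulsubmx M ord0 ord0 = 0 -> R'a = 0) ->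
  same_colspace (block_mx Ra (ursubmx M + R'a) 0 (drsubmx M)) M.
Proof.
move=> dl0 eRa eR'a; set a := ulsubmx M ord0 ord0; set B := block_mx _ _ _ _.
have eM : M = block_mx a%:M (ursubmx M) 0 (drsubmx M).
  by rewrite -{1}[M]submxK dl0 {1}[ulsubmx M]mx11_scalar.
have a0R : a = 0 -> Ra = 0 /\ R'a = 0.
  by move=> a0; split; [apply/eqP; rewrite eRa -/a a0 | exact: eR'a].
have BM : B = M *m block_mx (a^-1 *: Ra) (a^-1 *: R'a) 0 1%:M.
  rewrite eM /B mulmx_block !mulmx0 !mul0mx !mulmx1 !addr0 !add0r !mul_scalar_mx !scalerA.
  case: (eqVneq a 0) => [/a0R[-> ->]|nza]; first by rewrite !scaler0 addr0 add0r.
  by rewrite mulfV // !scale1r addrC.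
have MB : M = B *m block_mx (a *: pinvmx Ra) (- (pinvmx Ra *m R'a)) 0 1%:M.
  rewrite {1}eM /B mulmx_block !mulmx0 !mul0mx !mulmx1 !addr0 !add0r.
  case: (eqVneq a 0) => [a0|nza].
    by have [-> ->] := a0R a0; rewrite a0 !mul0mx add0r addr0 -scalemx1 scale0r.
  have Rfree : row_free Ra.
    by rewrite /row_free eqn_leq rank_leq_row lt0n mxrank_eq0 eRa.
  rewrite -scalemxAr mulmxVp // scalemx1 mulmxN (mulmxA Ra) mulmxVp // mul1mx.
  by rewrite addrCA addNr addr0.
by apply/andP; split; [rewrite {1}BM | rewrite {1}MB]; rewrite trmx_mul submxMl.
Qed.

Section BlockForm.

Variables (K : fieldType) (n' p' : nat) (S : {vspace 'M[K]_(1 + n', 1 + p')}).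
Hypothesis hshape : {in S, forall M, dlsubmx M = 0}.

Lemma block_form_range_preserving r (Q : 'M[K]_(r + p')) (R : K -> 'rV[K]_r)
    (R' : K -> 'rV[K]_p') (F : 'M[K]_(1 + n', 1 + p') -> 'M[K]_(1 + n', r + p')) :
  Q \in unitmx -> {morph R : x y / x + y} -> {morph R' : x y / x + y} -> injective R ->
  {in S, forall M, F M = block_mx (R (ulsubmx M ord0 ord0))
                                  (ursubmx M + R' (ulsubmx M ord0 ord0))
                                  0 (drsubmx M) *m Q} ->
  range_preserving_hom S F.
Proof.
move=> Qu R_add R'_add R_inj F_def; split=> [A B AS BS | M MS].
  have blocksD : [/\ ulsubmx (A + B) ord0 ord0 = ulsubmx A ord0 ord0 + ulsubmx B ord0 ord0,
      ursubmx (A + B) = ursubmx A + ursubmx B & drsubmx (A + B) = drsubmx A + drsubmx B].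
    by split; [rewrite !mxE | apply/matrixP => i j; rewrite !mxE ..].
  rewrite !F_def ?memvD //; case: blocksD => -> -> ->.
  by rewrite -mulmxDl add_block_mx addr0 R_add R'_add addrACA.
rewrite F_def // same_colspace_mulmx_unit //; apply: block_form_colspace (hshape MS) _ _.
  by rewrite -(inj_eq R_inj) (additive_morph0 R_add).
by move=> ->; exact: additive_morph0.
Qed.

(* With enough columns, the corner can be spread along a constant row. *)
Lemma range_preserving_exists q : (1 + p' <= q)%N ->
  exists F : 'M[K]_(1 + n', 1 + p') -> 'M[K]_(1 + n', q), range_preserving_hom S F.
Proof.
move=> hq; have [r ->] : exists r, q = (r.+1 + p')%N by exists (q - p'.+1)%N; lia.
pose R a : 'rV[K]_r.+1 := a *: const_mx 1; pose R' (a : K) : 'rV[K]_p' := 0.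
exists (fun M => block_mx (R (ulsubmx M ord0 ord0)) (ursubmx M + R' (ulsubmx M ord0 ord0))
                  0 (drsubmx M) *m 1%:M).
apply: (@block_form_range_preserving _ 1%:M R R') => //.
- exact: unitmx1.
- by move=> a b; rewrite /R scalerDl.
- by move=> a b; rewrite /R' addr0.
- by move=> a b /rowP/(_ 0); rewrite !mxE !mulr1.
Qed.

End BlockForm.

Section Classification.

Variables (K : fieldType) (n' p' : nat) (S : {vspace 'M[K]_(1 + n', 1 + p')}).
Hypotheses (hcodim : (codim S + 3 <= 2 * (1 + n'))%N)
  (hshape : {in S, forall M, dlsubmx M = 0})
  (hcol : exists2 M, M \in S & lsubmx M != 0).

(* Every range-preserving homomorphism into [r + p'] columns has the
   block form: complete [Y] to an invertible [Q] and read the corner row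
   [rv a] in the basis given by the rows of [Q]. *)
Lemma range_preserving_normal_form r (F : 'M[K]_(1 + n', 1 + p') -> 'M[K]_(1 + n', r + p')) :
  range_preserving_hom S F ->
  exists (Q : 'M[K]_(r + p')) (R : K -> 'rV[K]_r) (R' : K -> 'rV[K]_p'),
    [/\ Q \in unitmx, {morph R : x y / x + y}, {morph R' : x y / x + y}, injective R &
        {in S, forall M, F M = block_mx (R (ulsubmx M ord0 ord0))
                                        (ursubmx M + R' (ulsubmx M ord0 ord0))
                                        0 (drsubmx M) *m Q}].
Proof.
move=> F_rp; have [Y [rv [rv_add F_dec]]] := shaped_decomposition hcodim hshape hcol F_rp.
have [Z Qu] := row_free_completion (tail_row_free hcodim hshape F_rp rv_add F_dec).
set Q := col_mx Z Y.
pose R a := lsubmx (rv a *m invmx Q); pose R' a := rsubmx (rv a *m invmx Q).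
have rvQ a : rv a = R a *m Z + R' a *m Y by rewrite -mul_row_col hsubmxK mulmxKV.
have R_add : {morph R : x y / x + y} by move=> a b; rewrite /R rv_add mulmxDl linearD.
exists Q, R, R'; split=> //.
- by move=> a b; rewrite /R' rv_add mulmxDl linearD.
- move=> a b eR; apply/eqP; rewrite -subr_eq0; apply/eqP.
  have R0 : R (a - b) = 0 by apply: (addIr (R b)); rewrite -R_add subrK add0r.
  apply: (corner_row_free hcodim hshape hcol F_rp F_dec (z := - R' (a - b))).
  by rewrite rvQ R0 mul0mx add0r mulNmx addrN.
move=> M MS; rewrite F_dec // /Q mul_block_col mul0mx add0r /e1 mul_col_mx mul1mx mul0mx.
have -> : rsubmx M = col_mx (ursubmx M) (drsubmx M) by rewrite -{1}[M]submxK block_mxEh row_mxKr.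
by rewrite mul_col_mx add_col_mx add0r rvQ mulmxDl -addrA (addrC (R' _ *m Y)).
Qed.

(* A range-preserving homomorphism needs at least [1 + p'] columns: the rows
   of [Y] and the corner row [rv 1] are independent. *)
Lemma range_preserving_width q (F : 'M[K]_(1 + n', 1 + p') -> 'M[K]_(1 + n', q)) :
  range_preserving_hom S F -> (1 + p' <= q)%N.
Proof.
move=> F_rp; have [Y [rv [rv_add F_dec]]] := shaped_decomposition hcodim hshape hcol F_rp.
have := corner_tail_row_free hcodim hshape hcol F_rp rv_add F_dec (oner_neq0 K).
by move/eqP <-; exact: rank_leq_col.
Qed.

End Classification.

Theorem theorem7p6 (K : fieldType) (n' p' : nat)
  (S : {vspace 'M[K]_(1 + n', 1 + p')})
  (hcodim : (codim S + 3 <= 2 * (1 + n'))%N)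
  (hshape : {in S, forall M, dlsubmx M = 0})
  (hcol : exists2 M, M \in S & lsubmx M != 0) :
  (forall (r : nat), (0 < r)%N ->
   forall F : 'M[K]_(1 + n', 1 + p') -> 'M[K]_(1 + n', r + p'),
     range_preserving_hom S F <->
     exists (Q : 'M[K]_(r + p')) (R : K -> 'rV[K]_r) (R' : K -> 'rV[K]_p'),
       [/\ Q \in unitmx,
           {morph R : x y / x + y},
           {morph R' : x y / x + y},
           injective R &
           {in S, forall M,
              F M = block_mx (R (ulsubmx M ord0 ord0))
                             (ursubmx M + R' (ulsubmx M ord0 ord0))
                             0 (drsubmx M) *m Q}])
  /\
  (forall (q : nat), (0 < q)%N ->
     (exists F : 'M[K]_(1 + n', 1 + p') -> 'M[K]_(1 + n', q),
        range_preserving_hom S F) <-> (1 + p' <= q)%N).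
Proof.
split=> [r _ F | q _]; split.
- exact: (range_preserving_normal_form hcodim hshape hcol).
- case=> Q [R [R' [Qu R_add R'_add R_inj F_def]]].
  exact: (block_form_range_preserving hshape Qu R_add R'_add R_inj F_def).
- by case=> F; exact: (range_preserving_width hcodim hshape hcol).
- exact: (range_preserving_exists hshape).
Qed.
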